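(* Let $p\in(0,1/2)$, $\gamma\in(0,1)$, $L\ge1$ an integer, and let $\mathcal{C}\subseteq\mathbb{F}_2^n$ be a linear code of dimension $k\le(1-\gamma)n$ such that for all $1\le\ell\le L$, $$Q_{\mathcal{C}}^{(\ge\ell)}\le\left(2^{-n(1-H(p))}\cdot2^k\right)^\ell\cdot2^{\gamma\ell^2n}.$$ Then for $b$ chosen uniformly from $\mathbb{F}_2^n$, with probability at least $1-4L^3\cdot2^{-\gamma n}$ over $b$, for all $1\le\ell\le L$, $$Q_{\mathcal{C}+\{0,b\}}^{(\ge\ell)}\le\left(2^{-n(1-H(p))}\cdot2^{k+1}\right)^\ell\cdot2^{\gamma\ell^2n}.$$
   Context: $\Delta$ is Hamming distance, $L_{\mathcal{C}}(x)=|\{c\in\mathcal{C}:\Delta(x,c)\le pn\}|$, $H(p)=-p\log_2p-(1-p)\log_2(1-p)$. $P_{\mathcal{C}}^{(\ell)}=2^{-n}|\{x\in\mathbb{F}_2^n:L_{\mathcal{C}}(x)=\ell\}|$ and $Q_{\mathcal{C}}^{(\ge\ell)}=\sum_{i\ge\ell}i\cdot P_{\mathcal{C}}^{(i)}$. $\mathcal{C}+\{0,b\}=\mathcal{C}\cup(\mathcal{C}+b)$. *)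

From Stdlib Require Import Reals.
From mathcomp Require Import all_boot all_algebra.

Set Implicit Arguments.
Unset Strict Implicit.
Unset Printing Implicit Defensive.

Notation word n := 'rV['F_2]_n.

Definition Rleb (x y : R) : bool := if Rle_dec x y then true else false.

Definition log2 (x : R) : R := Rdiv (ln x) (ln 2).
Definition Hent (p : R) : R :=
  Rminus (Ropp (Rmult p (log2 p))) (Rmult (Rminus 1 p) (log2 (Rminus 1 p))).

Definition hamming n (x y : word n) : nat :=
  #|[set i : 'I_n | x ord0 i != y ord0 i]|.

Definition listsize n (p : R) (C : {set word n}) (x : word n) : nat :=
  #|[set c in C | Rleb (INR (hamming x c)) (Rmult p (INR n))]|.

Definition Pl n (p : R) (C : {set word n}) (l : nat) : R :=
  Rdiv (INR #|[set x : word n | listsize p C x == l]|) (pow 2 n).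

(* Q_C^(>= l) = sum_{i >= l} i * P_C^(i); since L_C(x) <= #|C| <= 2^n,
   P_C^(i) = 0 for i > 2^n, so the sum may be truncated at 2^n. *)
Definition Qge n (p : R) (C : {set word n}) (l : nat) : R :=
  \big[Rplus/R0]_(l <= i < (expn 2 n).+1) Rmult (INR i) (Pl p C i).

Definition addpair n (C : {set word n}) (b : word n) : {set word n} :=
  C :|: [set (@GRing.add _ c b) | c in C].

Definition vset n (C : {vspace word n}) : {set word n} := [set x | x \in C].

Definition qbound (n : nat) (p gamma : R) (k l : nat) : R :=
  Rmult (pow (Rmult (Rpower 2 (Ropp (Rmult (INR n) (Rminus 1 (Hent p))))) (pow 2 k)) l)
        (Rpower 2 (Rmult gamma (Rmult (pow (INR l) 2) (INR n)))).

(* Write 2^n Q^(>=l) as the sum over x of L(x), counted when L(x) >= l.  Since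
   L_{C+{0,b}}(x) <= L_C(x) + L_C(x+b), this mass at most doubles when C is
   replaced by C+{0,b}, up to a cross term in which both L_C(x) and L_C(x+b) are
   positive and add up to at least l.  For l = 1 there is no cross term.  Summed
   over b, the cross term is a convolution bounded by
   2 sum_(0<i<l) 2^n Q^(>=i) 2^n Q^(>=l-i), hence by the hypothesis and
   (i+j)^2 >= i^2 + j^2 + 1 by 2 L 4^n q_l 2^(-gamma n), where q_l is the bound on
   Q^(>=l).  By Markov's inequality the cross term exceeds 2^n q_l for at most
   2 L 2^n 2^(-gamma n) vectors b, and otherwise 2^n Q^(>=l) grows at most to
   3 2^n q_l <= 2^l 2^n q_l.  A union bound over l finishes. *)

From Stdlib Require Import Reals Lra.
From mathcomp Require Import all_boot all_algebra zify.

Set Implicit Arguments.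
Unset Strict Implicit.
Unset Printing Implicit Defensive.

Definition above (l t : nat) : nat := if (l <= t)%N then t else 0%N.

Lemma above1 t : above 1 t = t.
Proof. by rewrite /above; case: ifP; lia. Qed.

Lemma above_mono l : {homo above l : s t / (s <= t)%N}.
Proof. by move=> s t; rewrite /above; do 2 case: ifP; lia. Qed.

Lemma leq_above j t : (1 <= j)%N -> ((j <= t)%N : nat) <= above j t.
Proof. by rewrite /above; case: ifP => //=; lia. Qed.

Lemma leq_term_sum (I : eqType) (r : seq I) (F : I -> nat) i :
  i \in r -> (F i <= \sum_(j <- r) F j)%N.
Proof.
elim: r => //= a r IHr; rewrite in_cons big_cons => /orP[/eqP->|/IHr]; lia.
Qed.

(* When A, B > 0 and l <= A + B, the index i = min A (l - 1) picks up A, and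
   symmetrically for B. *)
Lemma above_addn l A B : (2 <= l)%N ->
  (above l (A + B) <= above l A + above l B +
     \sum_(1 <= i < l) (above i A * (l - i <= B) + above i B * (l - i <= A)))%N.
Proof.
move=> l_ge2; rewrite big_split /=.
have [->|A_gt0] := posnP A; first by rewrite add0n; lia.
have [->|B_gt0] := posnP B; first by rewrite addn0; lia.
have pick X Y : (0 < X)%N -> (0 < Y)%N -> (l <= X + Y)%N ->
    (X <= \sum_(1 <= i < l) above i X * (l - i <= Y))%N.
  move=> X_gt0 Y_gt0 lXY.
  apply: leq_trans
    (@leq_term_sum _ _ (fun i => above i X * (l - i <= Y))%N (minn X l.-1) _);
    last by rewrite mem_index_iota; lia.
  have -> : (l - minn X l.-1 <= Y)%N = true by apply/idP; lia.
  by rewrite muln1 /above; case: ifP; lia.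
rewrite {1}/above; case: ifP => [lAB|_]; last lia.
have hA := pick A B A_gt0 B_gt0 lAB.
have hB := pick B A B_gt0 A_gt0 ltac:(by rewrite addnC).
lia.
Qed.

Lemma sum_level_sets (T : finType) (f : T -> nat) m l :
  (forall x, f x <= m)%N ->
  (\sum_(l <= i < m.+1) i * #|[set x | f x == i]| = \sum_x above l (f x))%N.
Proof.
move=> f_le; under eq_bigr => i _ do rewrite -sum1_card big_mkcond big_distrr /=.
rewrite exchange_big /=; apply: eq_bigr => x _.
rewrite /above; case: ifP => [lfx|flx].
  have fx_range : f x \in index_iota l m.+1.
    by rewrite mem_index_iota; have := f_le x; lia.
  rewrite (bigD1_seq _ fx_range (iota_uniq _ _)) /= inE eqxx muln1 big1 ?addn0 // => i /negbTE.
  by rewrite inE eq_sym => ->; rewrite muln0.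
rewrite big_seq_cond big1 // => i /andP[]; rewrite mem_index_iota inE => /andP[li _] _.
by case: eqP => [fxi|]; rewrite ?muln0 //; move: flx; rewrite fxi li.
Qed.

Section Words.
Variable n : nat.
Local Notation W := (word n).

Lemma card_word : #|{: W}| = (2 ^ n)%N.
Proof. by rewrite card_mx card_Fp // mul1n. Qed.

Lemma hammingDr (x b c : W) : hamming x (c + b)%R = hamming (x - b)%R c.
Proof.
by rewrite /hamming; apply: eq_card => i; rewrite !inE !mxE GRing.subr_eq.
Qed.

Lemma sum_subr (G : W -> nat) b : (\sum_x G (x - b)%R = \sum_x G x)%N.
Proof.
by symmetry; rewrite (reindex_inj (h := fun x => (x - b)%R)) //; apply: GRing.addIr.
Qed.

Lemma sum_subl (G : W -> nat) x : (\sum_b G (x - b)%R = \sum_y G y)%N.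
Proof.
symmetry; rewrite (reindex_inj (h := fun b => (x - b)%R)) //.
by move=> u v /GRing.addrI /GRing.oppr_inj.
Qed.

Lemma sum_convolution (F G : W -> nat) :
  (\sum_b \sum_x F x * G (x - b)%R = (\sum_x F x) * (\sum_y G y))%N.
Proof.
rewrite exchange_big big_distrl /=; apply: eq_bigr => x _.
by rewrite -big_distrr /= sum_subl.
Qed.

Variable p : R.
Implicit Types (D : {set W}) (b x : W).

Lemma listsize_le D x : (listsize p D x <= 2 ^ n)%N.
Proof. by rewrite -card_word; apply: max_card. Qed.

Lemma listsize_addpair D b x :
  (listsize p (addpair D b) x <= listsize p D x + listsize p D (x - b)%R)%N.
Proof.
pose close (y c : W) := Rleb (INR (hamming y c)) (Rmult p (INR n)).
rewrite /listsize /addpair -/(close x _) -/(close (x - b)%R _).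
have -> : [set c in D :|: [set (c + b)%R | c in D] | close x c] =
    [set c in D | close x c] :|: [set (c + b)%R | c in [set c in D | close (x - b)%R c]].
  apply/setP => c; rewrite !inE andb_orl; congr (_ || _).
  apply/andP/imsetP => [[/imsetP[c' c'D ->] xc]|[c' /[!inE] /andP[c'D xc] ->]].
    by exists c'; rewrite // inE c'D /close -hammingDr.
  by split; [apply/imsetP; exists c' | rewrite /close hammingDr].
by rewrite (leq_trans (leq_card_setU _ _)) // card_imset //; apply: GRing.addIr.
Qed.

Definition Qmass D l : nat := \sum_x above l (listsize p D x).

Lemma INR_expn2 e : INR (2 ^ e)%N = pow 2 e.
Proof. by elim: e => //= e IHe; rewrite expnS mult_INR IHe. Qed.

Lemma Qge_Qmass D l : Qge p D l = Rdiv (INR (Qmass D l)) (pow 2 n).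
Proof.
have two_n_neq0 : pow 2 n <> R0 by apply: pow_nonzero; lra.
pose scale m := Rdiv (INR m) (pow 2 n).
rewrite /Qge /Pl (eq_bigr (fun i => scale (i * #|[set x | listsize p D x == i]|)%N));
  last by move=> i _; rewrite /scale mult_INR /Rdiv Rmult_assoc.
rewrite -(big_morph scale (id1 := R0) (op1 := Rplus) (id2 := 0%N) (op2 := addn) _ _
  (index_iota l (2 ^ n).+1) xpredT); first last.
- by rewrite /scale /Rdiv Rmult_0_l.
- by move=> u v; rewrite /scale plus_INR /Rdiv Rmult_plus_distr_r.
by rewrite /scale sum_level_sets // => x; apply: listsize_le.
Qed.

Lemma Qmass_addpair1 D b : (Qmass (addpair D b) 1 <= 2 * Qmass D 1)%N.
Proof.
rewrite /Qmass; under eq_bigr do rewrite above1.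
under [X in (_ <= _ * X)%N]eq_bigr do rewrite above1.
apply: (@leq_trans (\sum_x (listsize p D x + listsize p D (x - b)%R))).
  by apply: leq_sum => x _; apply: listsize_addpair.
by rewrite big_split /= sum_subr mul2n addnn.
Qed.

Definition cross D l b : nat :=
  \sum_x \sum_(1 <= i < l)
     (above i (listsize p D x) * (l - i <= listsize p D (x - b)%R) +
      above i (listsize p D (x - b)%R) * (l - i <= listsize p D x)).

Lemma Qmass_addpair D b l : (2 <= l)%N ->
  (Qmass (addpair D b) l <= 2 * Qmass D l + cross D l b)%N.
Proof.
move=> l_ge2; rewrite /Qmass /cross.
have pointwise x :
  (above l (listsize p (addpair D b) x) <=
   above l (listsize p D x) + above l (listsize p D (x - b)%R) +
   \sum_(1 <= i < l)
     (above i (listsize p D x) * (l - i <= listsize p D (x - b)%R) +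
      above i (listsize p D (x - b)%R) * (l - i <= listsize p D x)))%N.
  by apply: leq_trans (above_addn _ _ l_ge2); apply/above_mono/listsize_addpair.
apply: leq_trans (leq_sum _ (fun x _ => pointwise x)) _.
by rewrite !big_split /= (sum_subr (fun y => above l (listsize p D y))) mul2n addnn.
Qed.

Lemma sum_cross D l :
  (\sum_b cross D l b <= 2 * \sum_(1 <= i < l) Qmass D i * Qmass D (l - i))%N.
Proof.
rewrite /cross; under eq_bigr do rewrite exchange_big.
rewrite exchange_big /= big_distrr /= big_nat_cond [X in (_ <= X)%N]big_nat_cond.
apply: leq_sum => i /andP[/andP[i_ge1 i_lt_l] _].
under eq_bigr do rewrite big_split /=.
rewrite big_split /=.
pose F y := above i (listsize p D y).
pose G y : nat := (l - i <= listsize p D y)%N.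
rewrite (sum_convolution F G).
under [X in (_ + X <= _)%N]eq_bigr do under eq_bigr do rewrite mulnC.
rewrite (sum_convolution G F) -/(Qmass D i).
have count_le : (\sum_y G y <= Qmass D (l - i))%N.
  by apply: leq_sum => y _; apply: leq_above; lia.
have := leq_mul (leqnn (Qmass D i)) count_le; lia.
Qed.

End Words.

Lemma card_le_sum_cover (T : finType) (I : eqType) (r : seq I)
    (B : I -> {set T}) (A : {set T}) :
  (forall x, x \in A -> exists2 i, i \in r & x \in B i) ->
  (#|A| <= \sum_(i <- r) #|B i|)%N.
Proof.
move=> cover; apply: (@leq_trans #|\bigcup_(i <- r) B i|).
  apply/subset_leq_card/subsetP => x /cover[i r_i Bx].
  elim: r r_i {cover} => // j r IHr; rewrite in_cons big_cons in_setU.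
  by case/orP => [/eqP<-|/IHr->]; rewrite ?Bx ?orbT.
elim: r {cover} => [|i r IHr]; first by rewrite !big_nil cards0.
by rewrite !big_cons (leq_trans (leq_card_setU _ _)) // leq_add2l.
Qed.

Local Open Scope R_scope.

Lemma RlebP x y : reflect (x <= y) (Rleb x y).
Proof. by rewrite /Rleb; case: Rle_dec => h; constructor. Qed.

Lemma pow2_gt0 e : 0 < 2 ^ e.
Proof. apply: pow_lt; lra. Qed.

Lemma Qge_le n p (D : {set word n}) l q :
  Qge p D l <= q <-> INR (Qmass p D l) <= 2 ^ n * q.
Proof.
have N_gt0 := pow2_gt0 n.
rewrite Qge_Qmass /Rdiv; set t := INR _.
have inv_gt0 := Rinv_0_lt_compat _ N_gt0.
split => h.
  rewrite (_ : t = 2 ^ n * (t * / 2 ^ n)); last by field; lra.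
  apply: Rmult_le_compat_l; lra.
rewrite (_ : q = 2 ^ n * q * / 2 ^ n); last by field; lra.
apply: Rmult_le_compat_r; lra.
Qed.

Lemma INR_sum_le (I : eqType) (s : seq I) (f : I -> nat) c :
  0 <= c -> (forall i, i \in s -> INR (f i) <= c) ->
  INR (\sum_(i <- s) f i) <= INR (size s) * c.
Proof.
move=> c_ge0; elim: s => [|a s IHs] f_le; first by rewrite big_nil /=; lra.
have IH := IHs (fun i s_i => f_le i (mem_behead (s := a :: s) s_i)).
rewrite big_cons [size _]/= S_INR plus_INR; have := f_le a (mem_head a s); lra.
Qed.

Lemma INR_count_le_sum (T : Type) (s : seq T) (a : pred T) (f : T -> nat) c :
  (forall x, a x -> c <= INR (f x)) ->
  INR (count a s) * c <= INR (\sum_(x <- s) f x).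
Proof.
move=> f_ge; elim: s => [|x s IHs] /=; first by rewrite big_nil /=; lra.
rewrite big_cons !plus_INR; have := pos_INR (f x).
by case: (boolP (a x)) => ax /=; [have := f_ge x ax|]; lra.
Qed.

Lemma card_markov (T : finType) (f : T -> nat) c :
  INR #|[set b | ~~ Rleb (INR (f b)) c]| * c <= INR (\sum_b f b).
Proof.
rewrite cardE /enum_mem size_filter /index_enum -enumT.
apply: INR_count_le_sum => b; rewrite /= inE => /RlebP; lra.
Qed.

Lemma qbound_gt0 n p gamma k l : 0 < qbound n p gamma k l.
Proof.
have Rpower2_gt0 x : 0 < Rpower 2 x by apply: exp_pos.
apply: Rmult_lt_0_compat => //; apply: pow_lt.
by apply: Rmult_lt_0_compat => //; apply: pow2_gt0.
Qed.

Lemma qbound_succ n p gamma k l :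
  qbound n p gamma k.+1 l = 2 ^ l * qbound n p gamma k l.
Proof.
rewrite /qbound; set X := Rpower 2 _.
have -> : X * 2 ^ k.+1 = 2 * (X * 2 ^ k) by rewrite [2 ^ k.+1]/=; ring.
by rewrite Rpow_mult_distr; ring.
Qed.

(* [(i + j)^2 >= i^2 + j^2 + 1] pays for the extra factor [2^(-gamma n)]. *)
Lemma qbound_mulD n p gamma k i j : 0 <= gamma -> (1 <= i)%N -> (1 <= j)%N ->
  qbound n p gamma k i * qbound n p gamma k j <=
  qbound n p gamma k (i + j) * Rpower 2 (- (gamma * INR n)).
Proof.
move=> gamma_ge0 i_ge1 j_ge1; rewrite /qbound.
set a := Rmult (Rpower 2 _) (2 ^ k).
have a_gt0 : 0 < a.
  by apply: Rmult_lt_0_compat; [apply: exp_pos | apply: pow2_gt0].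
have exp_le : Rpower 2 (gamma * (INR i ^ 2 * INR n)) * Rpower 2 (gamma * (INR j ^ 2 * INR n))
    <= Rpower 2 (gamma * (INR (i + j) ^ 2 * INR n)) * Rpower 2 (- (gamma * INR n)).
  rewrite -!Rpower_plus; apply: Rle_Rpower; first lra.
  have i_ge1R : 1 <= INR i by apply: (le_INR 1); apply/leP.
  have j_ge1R : 1 <= INR j by apply: (le_INR 1); apply/leP.
  have gn_ge0 : 0 <= gamma * INR n by apply: Rmult_le_pos => //; apply: pos_INR.
  have : 0 <= gamma * INR n * (INR i * INR j - 1) by apply: Rmult_le_pos; nra.
  rewrite plus_INR; nra.
rewrite pow_add.
have aij_ge0 : 0 <= a ^ i * a ^ j by apply: Rmult_le_pos; apply: pow_le; lra.
have := Rmult_le_compat_l _ _ _ aij_ge0 exp_le; lra.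
Qed.

Section AddPair.
Variables (n k L : nat) (p gamma : R) (D : {set word n}).
Hypotheses (L_ge1 : (1 <= L)%N) (gamma_ge0 : 0 <= gamma).
Hypothesis Qge_le_qbound :
  forall l : nat, (1 <= l <= L)%N -> Qge p D l <= qbound n p gamma k l.

Local Notation qb := (qbound n p gamma).
Local Notation eps := (Rpower 2 (- (gamma * INR n))).

Lemma Qmass_le l : (1 <= l <= L)%N -> INR (Qmass p D l) <= 2 ^ n * qb k l.
Proof. by move=> l_range; apply/Qge_le/Qge_le_qbound. Qed.

Lemma Qge_addpair1 b : Qge p (addpair D b) 1 <= qb k.+1 1.
Proof.
apply/Qge_le; rewrite qbound_succ.
have := le_INR _ _ (elimT leP (Qmass_addpair1 p D b)).
have := Qmass_le (l := 1) ltac:(by rewrite leqnn).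
by rewrite mult_INR /=; lra.
Qed.

Lemma Qge_addpair b l : (2 <= l <= L)%N ->
  INR (cross p D l b) <= 2 ^ n * qb k l -> Qge p (addpair D b) l <= qb k.+1 l.
Proof.
move=> /andP[l_ge2 l_le] cross_le; apply/Qge_le; rewrite qbound_succ.
have two_pow_ge4 : 4 <= 2 ^ l.
  have -> : l = (2 + (l - 2))%N by lia.
  by rewrite pow_add [2 ^ 2]/=; have := pow_R1_Rle 2 (l - 2) ltac:(lra); lra.
have := le_INR _ _ (elimT leP (Qmass_addpair p D b l_ge2)).
have := Qmass_le (l := l) ltac:(by apply/andP; split => //; lia).
have Nq_ge0 : 0 <= 2 ^ n * qb k l.
  by apply: Rmult_le_pos; apply: Rlt_le; [apply: pow2_gt0 | apply: qbound_gt0].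
have := Rmult_le_pos _ _ Nq_ge0 (ltac:(lra) : 0 <= 2 ^ l - 4).
rewrite plus_INR mult_INR /=; nra.
Qed.

Definition cross_large l := [set b | ~~ Rleb (INR (cross p D l b)) (2 ^ n * qb k l)].

Lemma sum_Qmass_conv l : (l <= L)%N ->
  INR (\sum_(1 <= i < l) Qmass p D i * Qmass p D (l - i)) <=
  INR L * (2 ^ n * 2 ^ n * qb k l * eps).
Proof.
move=> l_le; have eps_gt0 : 0 < eps by apply: exp_pos.
have N_gt0 := pow2_gt0 n; have ql_gt0 := qbound_gt0 n p gamma k l.
have c_ge0 : 0 <= 2 ^ n * 2 ^ n * qb k l * eps.
  by do 3 (apply: Rmult_le_pos; last lra); lra.
apply: (Rle_trans _ _ _ (INR_sum_le c_ge0 _)).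
- move=> i; rewrite mem_index_iota => /andP[i_ge1 i_lt_l]; rewrite mult_INR.
  have Qi := Qmass_le (l := i) ltac:(by apply/andP; split => //; lia).
  have Qli := Qmass_le (l := l - i) ltac:(by apply/andP; split; lia).
  have := @qbound_mulD n p gamma k i (l - i) gamma_ge0 i_ge1 ltac:(lia).
  rewrite subnKC; last lia.
  have := pos_INR (Qmass p D i); have := pos_INR (Qmass p D (l - i)).
  have := qbound_gt0 n p gamma k i; have := qbound_gt0 n p gamma k (l - i).
  nra.
- apply: Rmult_le_compat_r => //.
  by rewrite size_iota; apply: le_INR; apply/leP; lia.
Qed.

Lemma card_cross_large l : (2 <= l <= L)%N ->
  INR #|cross_large l| <= 2 * INR L * 2 ^ n * eps.
Proof.
move=> /andP[l_ge2 l_le].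
have Nq_gt0 : 0 < 2 ^ n * qb k l.
  by apply: Rmult_lt_0_compat; [apply: pow2_gt0 | apply: qbound_gt0].
have markov := card_markov (cross p D l) (2 ^ n * qb k l).
have sum_le := le_INR _ _ (elimT leP (sum_cross p D l)).
have conv := sum_Qmass_conv l_le.
rewrite mult_INR /= in sum_le.
apply: (Rmult_le_reg_r _ _ _ Nq_gt0).
have -> : 2 * INR L * 2 ^ n * eps * (2 ^ n * qb k l) =
          2 * (INR L * (2 ^ n * 2 ^ n * qb k l * eps)) by ring.
rewrite /cross_large; apply: (Rle_trans _ _ _ markov); apply: (Rle_trans _ _ _ sum_le); lra.
Qed.

Local Notation good := [set b | [forall l : 'I_L.+1, (1 <= l)%N ==>
                                    Rleb (Qge p (addpair D b) l) (qb k.+1 l)]].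

Lemma not_good_cross_large :
  {in ~: good, forall b, exists2 l, l \in index_iota 2 L.+1 & b \in cross_large l}.
Proof.
move=> b; rewrite !inE => /forallPn[l].
rewrite negb_imply => /andP[l_ge1 /RlebP not_le].
have l_ge2 : (2 <= l)%N.
  rewrite ltn_neqAle l_ge1 andbT eq_sym; apply/eqP => l_eq1.
  by apply: not_le; rewrite l_eq1; apply: Qge_addpair1.
exists (nat_of_ord l); first by rewrite mem_index_iota l_ge2 ltn_ord.
rewrite inE; apply/negP => /RlebP cross_le; apply: not_le.
by apply: Qge_addpair cross_le; rewrite l_ge2 -ltnS ltn_ord.
Qed.

Lemma card_not_good : INR #|~: good| <= 2 * INR L ^ 2 * eps * 2 ^ n.
Proof.
have eps_gt0 : 0 < eps by apply: exp_pos.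
have c_ge0 : 0 <= 2 * INR L * 2 ^ n * eps.
  have L_ge0 := pos_INR L; have N_gt0 := pow2_gt0 n.
  by do 3 (apply: Rmult_le_pos; last lra); lra.
apply: (Rle_trans _ _ _ (le_INR _ _ (elimT leP (card_le_sum_cover not_good_cross_large)))).
apply: (Rle_trans _ _ _ (INR_sum_le c_ge0 _)).
  by move=> l; rewrite mem_index_iota => l_range; apply: card_cross_large.
rewrite (_ : 2 * INR L ^ 2 * eps * 2 ^ n = INR L * (2 * INR L * 2 ^ n * eps));
  last by rewrite /=; ring.
apply: Rmult_le_compat_r => //.
by rewrite size_iota; apply: le_INR; apply/leP; lia.
Qed.

End AddPair.

Theorem lemma4 (n k L : nat) (p gamma : R) (C : {vspace 'rV['F_2]_n}) :
  0 < p < 1 / 2 ->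
  0 < gamma < 1 ->
  (1 <= L)%N ->
  \dim C = k ->
  INR k <= (1 - gamma) * INR n ->
  (forall l : nat, (1 <= l <= L)%N ->
     Qge p (vset C) l <= qbound n p gamma k l) ->
  INR #|[set b : 'rV['F_2]_n |
           [forall l : 'I_L.+1, (1 <= l)%N ==>
              Rleb (Qge p (addpair (vset C) b) l) (qbound n p gamma k.+1 l)]]|
     / 2 ^ n
  >= 1 - 4 * INR L ^ 3 * Rpower 2 (- (gamma * INR n)).
Proof.
move=> _ [gamma_gt0 _] L_ge1 _ _ Qge_le_qbound.
have bad_le := card_not_good L_ge1 (Rlt_le _ _ gamma_gt0) Qge_le_qbound.
set good := [set b | _] in bad_le *; set eps := Rpower 2 _ in bad_le *.
have N_gt0 := pow2_gt0 n.
have eps_ge0 : 0 <= eps by apply/Rlt_le/exp_pos.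
have L_ge1R : 1 <= INR L by apply: (le_INR 1); apply/leP.
have card_good : INR #|good| = 2 ^ n - INR #|~: good|.
  by rewrite -INR_expn2 -card_word -(cardsC good) plus_INR; ring.
have L_pow : 2 * INR L ^ 2 * eps * 2 ^ n <= 4 * INR L ^ 3 * eps * 2 ^ n.
  have : 0 <= 2 * INR L ^ 2 * eps * 2 ^ n * (2 * INR L - 1).
    by do 3 (apply: Rmult_le_pos; last lra); nra.
  by rewrite [INR L ^ 3]/= [INR L ^ 2]/=; lra.
apply: Rle_ge; apply: (Rmult_le_reg_r (2 ^ n)) => //.
have -> : INR #|good| / 2 ^ n * 2 ^ n = INR #|good| by field; lra.
rewrite card_good; lra.
Qed.
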